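(* For $n,m\ge2$ and $k\ge1$, let $X^{n,m}_k$ be the set of $p\in([0,1]\cap\mathbb Q)^{n^2m^2}$ for which there exists a $k$-approximate trace $\tau:\mathbb F(n,m)\to\mathbb D\cap\mathbb Q(i)$ that is $k$-adapted to $p$. Then each $X^{n,m}_k$ is recursively enumerable, uniformly in $k$, $n$ and $m$.
   Context: $\mathbb D$ is the closed unit disc in $\mathbb C$, $[n]=\{1,\dots,n\}$. $\mathbb F(n,m)$ is the free product of $n$ cyclic groups of order $m$, with generators $u_1,\dots,u_n$ and a fixed effective enumeration of its elements. Functions $\tau:\mathbb F(n,m)\to\mathbb D$ are extended linearly to $\mathbb Q(i)\mathbb F(n,m)$. Approximate traces: fix an effective enumeration $(R_l)_{l\ge1}$ (independent of the group, via a fixed coding of $\mathbb Q(i)$ and of indices into the enumeration of the group $G$) of all requirements of the forms ''$\sum_{\lambda,\gamma}\overline{a_\lambda}a_\gamma\tau(\lambda^{-1}\gamma)\ge0$'' for $\sum a_\lambda u_\lambda\in\mathbb Q(i)G$ and ''$\tau(\gamma^{-1}\lambda\gamma)=\tau(\lambda)$'' for $\lambda,\gamma\in G$. For $k\ge1$, the relaxation $R^k_l$ of the first kind says $\sum\overline{a_\lambda}a_\gamma\tau(\lambda^{-1}\gamma)$ is within $1/k$ of the nonnegative real axis, and of the second kind says $|\tau(\gamma^{-1}\lambda\gamma)-\tau(\lambda)|<1/k$. A function $\tau:G\to\mathbb D$ is a $k$-approximate trace on $G$ if $R^k_1,\dots,R^k_k$ hold. Adaptedness: in $C^*(\mathbb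 F(n,m))$, $e^{n,m}_{v,i}$ is the spectral projection of $u_v$ for eigenvalue $\xi_m^i$ ($\xi_m$ a primitive $m$-th root of unity). Fix a computable function $(v,w,i,j,k,n,m)\mapsto s^{n,m}_{v,w,i,j,k}\in\mathbb Q(i)\mathbb F(n,m)$ with $\|e^{n,m}_{v,i}e^{n,m}_{w,j}-s^{n,m}_{v,w,i,j,k}\|<1/k$ in $C^*(\mathbb F(n,m))$. A function $\tau:\mathbb F(n,m)\to\mathbb D$ is $k$-adapted to $p\in[0,1]^{n^2m^2}$ if $|p(i,j|v,w)-\tau(s^{n,m}_{v,w,i,j,k})|<1/k$ for all $v,w\in[n]$, $i,j\in[m]$. *)

From HB Require Import structures.
From mathcomp Require Import all_boot all_order all_algebra.
Unset Printing Implicit Defensive.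
Import Order.TTheory GRing.Theory Num.Theory.

(*    enumerability are defined via programs of this language, so that *)
(*    classical axioms cannot trivialize them.                         *)

Inductive prog : Type :=
| PZero : prog
| PSucc : prog
| PProj : nat -> prog
| PComp : prog -> list prog -> prog
| PPrim : prog -> prog -> prog
| PMu   : prog -> prog.

Inductive eval : prog -> seq nat -> nat -> Prop :=
| eZero a : eval PZero a 0
| eSucc a : eval PSucc a (nth 0 a 0).+1
| eProj i a : eval (PProj i) a (nth 0 a i)
| eComp f gs a ys y : evals gs a ys -> eval f ys y -> eval (PComp f gs) a y
| ePrim0 f g a y : eval f a y -> eval (PPrim f g) (0 :: a) y
| ePrimS f g n a r y : eval (PPrim f g) (n :: a) r ->
    eval g [:: n, r & a] y -> eval (PPrim f g) (n.+1 :: a) y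
| eMu f a n : eval f (n :: a) 0 ->
    (forall i, i < n -> exists2 v, v != 0 & eval f (i :: a) v) ->
    eval (PMu f) a n
with evals : list prog -> seq nat -> seq nat -> Prop :=
| esNil a : evals nil a [::]
| esCons g gs a y ys : eval g a y -> evals gs a ys -> evals (g :: gs) a (y :: ys).

Definition halts (e : prog) (x : nat) : Prop := exists y, eval e [:: x] y.

Definition npair (x y : nat) : nat := (x + y) * (x + y).+1 %/ 2 + y.
Definition nunpair (z : nat) : nat * nat :=
  let w := (Nat.sqrt (8 * z + 1) - 1) %/ 2 in
  let t := w * w.+1 %/ 2 in (w - (z - t), z - t).

Fixpoint code_list (l : seq nat) : nat :=
  if l is x :: l' then (npair x (code_list l')).+1 else 0.

Fixpoint decode_list_fuel (fuel z : nat) : seq nat :=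
  match fuel, z with
  | 0, _ => [::]
  | _, 0 => [::]
  | f.+1, z'.+1 => (nunpair z').1 :: decode_list_fuel f (nunpair z').2
  end.
Definition decode_list (z : nat) : seq nat := decode_list_fuel z z.

Local Open Scope ring_scope.

Definition code_rat (q : rat) : nat :=
  npair (if numq q < 0 then 1%N else 0%N) (npair (absz (numq q)) (absz (denq q)).-1).

Definition decode_rat (z : nat) : rat :=
  let sr := nunpair z in let ab := nunpair sr.2 in
  (if sr.1 == 0%N then 1 else -1) * (ab.1%:R / (ab.2.+1)%:R).

Definition Qi : Type := (rat * rat)%type.
Definition qi_of_rat (q : rat) : Qi := (q, 0).
Definition qi0 : Qi := (0, 0).
Definition qadd (x y : Qi) : Qi := (x.1 + y.1, x.2 + y.2).
Definition qsub (x y : Qi) : Qi := (x.1 - y.1, x.2 - y.2).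
Definition qmul (x y : Qi) : Qi := (x.1 * y.1 - x.2 * y.2, x.1 * y.2 + x.2 * y.1).
Definition qconj (x : Qi) : Qi := (x.1, - x.2).
Definition qnorm2 (x : Qi) : rat := x.1 ^+ 2 + x.2 ^+ 2.

Definition code_qi (x : Qi) : nat := npair (code_rat x.1) (code_rat x.2).
Definition decode_qi (z : nat) : Qi :=
  (decode_rat (nunpair z).1, decode_rat (nunpair z).2).

(*    A word is a list of letters (v, e) standing for u_v ^ e          *)
(*    (generators indexed 0..n-1).  [nf n m w] is the reduced normal   *)
(*    form of the group element represented by w: the elements of     *)
(*    F(n,m) are exactly the reduced words (fixed points of nf).       *)

Definition word := seq (nat * nat).

(* push a letter onto a reversed reduced word *)
Definition push_letter (m : nat) (st : word) (l : nat * nat) : word :=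
  let e := (l.2 %% m)%N in
  if e == 0%N then st else
  match st with
  | (v', e') :: rest =>
      if v' == l.1 then
        let f := ((e' + e) %% m)%N in
        if f == 0%N then rest else (l.1, f) :: rest
      else (l.1, e) :: st
  | [::] => [:: (l.1, e)]
  end.

Definition nf (n m : nat) (w : word) : word :=
  rev (foldl (fun st l => if (l.1 < n)%N then push_letter m st l else st) [::] w).

Definition gmul (n m : nat) (x y : word) : word := nf n m (x ++ y).
Definition ginv (n m : nat) (x : word) : word :=
  nf n m (rev (map (fun l => (l.1, (m - l.2 %% m)%N)) x)).

(* Fixed effective enumeration of F(n,m) (surjective onto reduced words). *)
Definition code_word (w : word) : nat := code_list (map (fun l => npair l.1 l.2) w).
Definition group_elt (n m : nat) (l : nat) : word :=
  nf n m (map nunpair (decode_list l)).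

(* Elements of the group algebra Q(i)F(n,m): formal finite sums
   sum a_j u_(g_j), given as lists of (coefficient, word). *)
Definition gralg := seq (Qi * word).
Definition code_gralg (x : gralg) : nat :=
  code_list (map (fun aw => npair (code_qi aw.1) (code_word aw.2)) x).

Definition tau_ext (n m : nat) (tau : word -> Qi) (x : gralg) : Qi :=
  foldr (fun aw acc => qadd (qmul aw.1 (tau (nf n m aw.2))) acc) qi0 x.

(* 5. Approximate traces.  The fixed effective enumeration (R_l)_(l>=1)*)
(*    of requirements: R_(l+1) is decoded from the natural number l.   *)
(*    Tag 0: positivity requirement for sum_j a_j u_(lambda_j);        *)
(*    other tags: conjugation invariance tau(g^-1 h g) = tau(h).       *)

(* z is within distance 1/k of the nonnegative real axis (strictly) *)
Definition near_nonneg (k : nat) (z : Qi) : bool :=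
  if 0 <= z.1 then z.2 ^+ 2 < (k%:R ^+ 2)^-1
  else qnorm2 z < (k%:R ^+ 2)^-1.

Definition pos_form (n m : nat) (tau : word -> Qi) (x : gralg) : Qi :=
  foldr qadd qi0
    [seq qmul (qmul (qconj p.1) q.1) (tau (gmul n m (ginv n m p.2) q.2))
       | p <- x, q <- x].

Definition relaxed_req (n m k : nat) (tau : word -> Qi) (l : nat) : Prop :=
  let tr := nunpair l in
  if tr.1 == 0%N then
    let x : gralg :=
      map (fun c => (decode_qi (nunpair c).1, group_elt n m (nunpair c).2))
          (decode_list tr.2) in
    near_nonneg k (pos_form n m tau x)
  else
    let lam := group_elt n m (nunpair tr.2).1 in
    let gam := group_elt n m (nunpair tr.2).2 in
    qnorm2 (qsub (tau (gmul n m (ginv n m gam) (gmul n m lam gam))) (tau lam))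
      < (k%:R ^+ 2)^-1.

Definition approx_trace (n m k : nat) (tau : word -> Qi) : Prop :=
  forall l, (l < k)%N -> relaxed_req n m k tau l.

Definition disc_valued (n m : nat) (tau : word -> Qi) : Prop :=
  forall w, qnorm2 (tau (nf n m w)) <= 1.

(*    Indices v,w in [n], i,j in [m] are 0-based here.  A point         *)
(*    p in [0,1]^{n^2 m^2} is a function p v w i j = p(i,j|v,w).        *)
(*    s v w i j k n m is the fixed computable s^{n,m}_{v,w,i,j,k}.       *)

Definition sfun := nat -> nat -> nat -> nat -> nat -> nat -> nat -> gralg.

Definition computable_s (s : sfun) : Prop :=
  exists e : prog, forall v w i j k n m : nat,
    eval e [:: code_list [:: v; w; i; j; k; n; m]] (code_gralg (s v w i j k n m)).

Definition adapted (n m k : nat) (s : sfun)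
    (p : 'I_n -> 'I_n -> 'I_m -> 'I_m -> rat) (tau : word -> Qi) : Prop :=
  forall (v w : 'I_n) (i j : 'I_m),
    qnorm2 (qsub (qi_of_rat (p v w i j))
                 (tau_ext n m tau (s v w i j k n m))) < (k%:R ^+ 2)^-1.

Definition in_X (n m k : nat) (s : sfun)
    (p : 'I_n -> 'I_n -> 'I_m -> 'I_m -> rat) : Prop :=
  exists tau : word -> Qi,
    [/\ disc_valued n m tau, approx_trace n m k tau & adapted n m k s p tau].

Definition code_input (n m k : nat) (p : 'I_n -> 'I_n -> 'I_m -> 'I_m -> rat) : nat :=
  code_list [:: n; m; k; code_list
    (flatten [seq flatten [seq flatten [seq [seq code_rat (p v w i j)
        | j <- enum 'I_m] | i <- enum 'I_m] | w <- enum 'I_n] | v <- enum 'I_n])].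

(* A point p lies in X^{n,m}_k iff some finite table of Gaussian rationals
   passes a decidable test: the requirements R^k_1, ..., R^k_k and the
   adaptedness conditions only mention finitely many group elements, a table
   listing tau on them can be read back as a function that is 0 (hence in the
   disc) elsewhere, and conversely any witness tau can be tabulated on those
   elements.  The test only uses primitive recursive operations on codes
   (Cantor pairing, list codes, normal forms in F(n,m), exact arithmetic on
   unnormalised rationals), so the unbounded search for a passing table is a
   single mu-program, uniform in n, m and k. *)

From Stdlib Require Import PeanoNat.
From mathcomp Require Import all_boot all_order all_algebra.
From mathcomp Require Import zify ring lra.
Import Order.TTheory GRing.Theory Num.Theory.
Set Warnings "-notation-overridden,-ambiguous-paths".

Set Implicit Arguments.
Unset Strict Implicit.

(** * Computable functions *)

Fixpoint prog_nested_ind (P : prog -> Prop) (H0 : P PZero) (H1 : P PSucc)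
  (H2 : forall i, P (PProj i))
  (H3 : forall f gs, P f -> List.Forall P gs -> P (PComp f gs))
  (H4 : forall f g, P f -> P g -> P (PPrim f g))
  (H5 : forall f, P f -> P (PMu f)) (p : prog) {struct p} : P p :=
  let IH := prog_nested_ind H0 H1 H2 H3 H4 H5 in
  match p with
  | PZero => H0 | PSucc => H1 | PProj i => H2 i
  | PComp f gs => H3 f gs (IH f)
      ((fix F (l : list prog) : List.Forall P l :=
         match l with nil => List.Forall_nil P
         | g :: l' => List.Forall_cons g (IH g) (F l') end) gs)
  | PPrim f g => H4 f g (IH f) (IH g)
  | PMu f => H5 f (IH f)
  end.

Lemma eval_functional e a y1 y2 : eval e a y1 -> eval e a y2 -> y1 = y2.
Proof.
elim/prog_nested_ind: e a y1 y2.
- by move=> a y1 y2 H1 H2; inversion H1; inversion H2.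
- by move=> a y1 y2 H1 H2; inversion H1; inversion H2.
- by move=> i a y1 y2 H1 H2; inversion H1; inversion H2.
- move=> f gs IHf IHgs a y1 y2 H1 H2; inversion H1; inversion H2; subst.
  suff E : ys = ys0 by subst; apply: IHf; eauto.
  clear -IHgs H3 H9; elim: IHgs ys ys0 H3 H9.
    by move=> ys ys0 A B; inversion A; inversion B.
  move=> g l Hg _ IH ys ys0 A B; inversion A; inversion B; subst.
  by rewrite (Hg _ _ _ H1 H7) (IH _ _ H4 H10).
- move=> f g IHf IHg [|n a] y1 y2 H1 H2; first by inversion H1.
  elim: n y1 y2 H1 H2 => [|n IH] y1 y2 H1 H2; inversion H1; inversion H2; subst.
    by eauto.
  by have E := IH _ _ H6 H13; subst; eauto.
- move=> f IHf a y1 y2 H1 H2; inversion H1; inversion H2; subst.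
  case: (ltngtP y1 y2) => // L.
  + have [v v0 Hv] := H8 _ L; by rewrite -(IHf _ _ _ H0 Hv) in v0.
  + have [v v0 Hv] := H3 _ L; by rewrite -(IHf _ _ _ H7 Hv) in v0.
Qed.

Definition computable (ar : nat) (f : seq nat -> nat) :=
  exists e, forall a, size a = ar -> eval e a (f a).

Definition computableb (ar : nat) (P : seq nat -> bool) :=
  computable ar (fun a => nat_of_bool (P a)).

Fixpoint primrec (f g : seq nat -> nat) (n : nat) (a : seq nat) : nat :=
  if n is n'.+1 then g (n' :: primrec f g n' a :: a) else f a.

Lemma computable_ext ar f g :
  computable ar f -> (forall a, size a = ar -> f a = g a) -> computable ar g.
Proof. by move=> [e He] E; exists e => a Ha; rewrite -E //; apply: He. Qed.

Lemma computable_zero ar : computable ar (fun _ => 0).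
Proof. by exists PZero => a _; constructor. Qed.

Lemma computable_proj ar i : computable ar (fun a => nth 0 a i).
Proof. by exists (PProj i) => a _; constructor. Qed.

Lemma computable_succ ar f : computable ar f -> computable ar (fun a => (f a).+1).
Proof.
move=> [e He]; exists (PComp PSucc [:: e]) => a Ha.
apply: (@eComp _ _ _ [:: f a]); first by constructor; [apply: He|constructor].
exact: eSucc.
Qed.

Lemma computable_const ar c : computable ar (fun _ => c).
Proof. elim: c => [|c IH]; [exact: computable_zero|exact: computable_succ]. Qed.

Lemma computable_comp ar j f gs : computable j f -> size gs = j ->
  List.Forall (computable ar) gs -> computable ar (fun a => f (map (fun g => g a) gs)).
Proof.
move=> [F HF] Hj Hgs.
have [Es HEs] : exists Es, forall a, size a = ar -> evals Es a (map (fun g => g a) gs).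
  elim: Hgs => [|g l [G HG] _ [Es HEs]]; first by exists nil => a _; constructor.
  by exists (G :: Es) => a Ha /=; constructor; [apply: HG|apply: HEs].
exists (PComp F Es) => a Ha; econstructor; first exact: HEs.
by apply: HF; rewrite size_map.
Qed.

Lemma computable_primrec ar f g h : computable ar f -> computable ar.+2 g ->
  computable ar h -> computable ar (fun a => primrec f g (h a) a).
Proof.
move=> [F HF] [G HG] [H HH].
exists (PComp (PPrim F G) (H :: map PProj (iota 0 ar))) => a Ha.
apply: (@eComp _ _ _ (h a :: a)).
  constructor; first exact: HH.
  rewrite -{2}(mkseq_nth 0 a) Ha /mkseq; elim: (iota 0 ar) => [|i l IH] /=; constructor => //.
  exact: eProj.
elim: (h a) => [|n IH] /=; first by constructor; apply: HF.
by econstructor; [exact: IH|apply: HG => /=; rewrite Ha].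
Qed.

Lemma computable_reindex ar (idx : seq nat) f : computable (size idx) f ->
  computable ar (fun b => f (map (nth 0 b) idx)).
Proof.
move=> Hf; have Hidx : List.Forall (computable ar) (map (fun i b => nth 0 b i) idx).
  by elim: idx {Hf} => [|i l IH] /=; constructor => //; exact: computable_proj.
apply: computable_ext (computable_comp Hf (size_map _ _) Hidx) _ => a _.
by rewrite -map_comp.
Qed.

Lemma map_nth_iota_drop (b : seq nat) j : map (nth 0 b) (iota j (size b - j)) = drop j b.
Proof.
apply: (@eq_from_nth _ 0); rewrite ?size_map ?size_iota ?size_drop // => i Hi.
by rewrite (nth_map 0) ?size_iota // nth_iota // nth_drop.
Qed.

Lemma computable_drop j ar f : computable ar f -> computable (j + ar) (fun b => f (drop j b)).
Proof.
move=> Hf; have {}Hf : computable (size (iota j ar)) f by rewrite size_iota.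
apply: computable_ext (computable_reindex _ Hf) _.
by move=> b Hb; rewrite -map_nth_iota_drop Hb addKn.
Qed.

Lemma computable_cons_drop j ar i f : computable ar.+1 f ->
  computable (j + ar) (fun b => f (nth 0 b i :: drop j b)).
Proof.
move=> Hf; have {}Hf : computable (size (i :: iota j ar)) f by rewrite /= size_iota.
apply: computable_ext (computable_reindex _ Hf) _ => b Hb.
by rewrite /= -map_nth_iota_drop Hb addKn.
Qed.

Lemma computable_app1 ar (f : nat -> nat) g :
  computable 1 (fun a => f (nth 0 a 0)) -> computable ar g -> computable ar (fun a => f (g a)).
Proof. by move=> Hf Hg; apply: (@computable_comp ar 1 _ [:: g] Hf); repeat constructor. Qed.

Lemma computable_app2 ar (f : nat -> nat -> nat) g1 g2 :
  computable 2 (fun a => f (nth 0 a 0) (nth 0 a 1)) -> computable ar g1 -> computable ar g2 ->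
  computable ar (fun a => f (g1 a) (g2 a)).
Proof.
by move=> Hf H1 H2; apply: (@computable_comp ar 2 _ [:: g1; g2] Hf); repeat constructor.
Qed.

Lemma computable_iter ar x0 h step : computable ar x0 -> computable ar h ->
  computable ar.+1 step ->
  computable ar (fun a => iter (h a) (fun acc => step (acc :: a)) (x0 a)).
Proof.
move=> H0 Hh Hs; apply: computable_ext (computable_primrec H0 (computable_cons_drop 2 1 Hs) Hh) _.
by move=> a _; elim: (h a) => //= n ->; rewrite drop0.
Qed.

Lemma computable_add ar f g : computable ar f -> computable ar g ->
  computable ar (fun a => f a + g a).
Proof.
apply: computable_app2.
apply: computable_ext (computable_iter (computable_proj 2 1) (computable_proj 2 0)
  (computable_succ (computable_proj 3 0))) _ => a _.
by elim: (nth 0 a 0) => //= n ->.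
Qed.

Lemma computable_mul ar f g : computable ar f -> computable ar g ->
  computable ar (fun a => f a * g a).
Proof.
apply: computable_app2.
apply: computable_ext (computable_iter (computable_zero 2) (computable_proj 2 0)
  (computable_add (computable_proj 3 0) (computable_proj 3 2))) _ => a _.
by elim: (nth 0 a 0) => //= n ->; rewrite mulSn addnC.
Qed.

Lemma computable_pred ar f : computable ar f -> computable ar (fun a => (f a).-1).
Proof.
apply: computable_app1.
apply: computable_ext (computable_primrec (computable_zero 1) (computable_proj 3 0)
  (computable_proj 1 0)) _ => a _.
by case: (nth 0 a 0).
Qed.

Lemma computable_sub ar f g : computable ar f -> computable ar g ->
  computable ar (fun a => f a - g a).
Proof.
apply: computable_app2.
apply: computable_ext (computable_iter (computable_proj 2 0) (computable_proj 2 1)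
  (computable_pred (computable_proj 3 0))) _ => a _.
by elim: (nth 0 a 1) => /= [|n ->]; rewrite ?subn0 ?subnS.
Qed.

Lemma computableb_eq0 ar f : computable ar f -> computableb ar (fun a => f a == 0).
Proof.
apply: (@computable_app1 ar (fun x => nat_of_bool (x == 0))).
apply: computable_ext (computable_iter (computable_const 1 1) (computable_proj 1 0)
  (computable_zero 2)) _ => a _.
by case: (nth 0 a 0) => //= n; rewrite iterS.
Qed.

Lemma computableb_leq ar f g : computable ar f -> computable ar g ->
  computableb ar (fun a => f a <= g a).
Proof. by move=> Hf Hg; apply: computableb_eq0 (computable_sub Hf Hg). Qed.

Lemma computableb_ltn ar f g : computable ar f -> computable ar g ->
  computableb ar (fun a => f a < g a).
Proof. by move=> Hf Hg; apply: computableb_leq (computable_succ Hf) Hg. Qed.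

Lemma computableb_and ar P Q : computableb ar P -> computableb ar Q ->
  computableb ar (fun a => P a && Q a).
Proof.
move=> HP HQ; apply: computable_ext (computable_mul HP HQ) _ => a _.
by case: (P a); case: (Q a).
Qed.

Lemma computableb_neg ar P : computableb ar P -> computableb ar (fun a => ~~ P a).
Proof.
move=> HP; apply: computable_ext (computable_sub (computable_const ar 1) HP) _ => a _.
by case: (P a).
Qed.

Lemma computableb_eq ar f g : computable ar f -> computable ar g ->
  computableb ar (fun a => f a == g a).
Proof.
move=> Hf Hg; apply: computable_ext (computableb_and (computableb_leq Hf Hg) (computableb_leq Hg Hf)) _.
by move=> a _; rewrite eqn_leq.
Qed.

Lemma computable_if ar c f g : computableb ar c -> computable ar f -> computable ar g ->
  computable ar (fun a => if c a then f a else g a).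
Proof.
move=> Hc Hf Hg.
apply: computable_ext (computable_add (computable_mul Hc Hf) (computable_mul (computableb_neg Hc) Hg)) _.
by move=> a _; case: (c a) => /=; rewrite ?mul1n ?mul0n ?addn0.
Qed.

Lemma computableb_if ar c P Q : computableb ar c -> computableb ar P -> computableb ar Q ->
  computableb ar (fun a => if c a then P a else Q a).
Proof.
by move=> Hc HP HQ; apply: computable_ext (computable_if Hc HP HQ) _ => a _; case: (c a).
Qed.

Lemma computable_sum ar body h : computable ar.+1 body -> computable ar h ->
  computable ar (fun a => \sum_(i < h a) body (nat_of_ord i :: a)).
Proof.
move=> Hb Hh.
have Hg := computable_add (computable_proj _ 1) (computable_cons_drop 2 0 Hb).
apply: computable_ext (computable_primrec (computable_zero _) Hg Hh) _ => a _.
by elim: (h a) => [|n IH]; rewrite ?big_ord0 // big_ord_recr /= IH drop0.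
Qed.

Lemma computableb_all ar P h : computableb ar.+1 P -> computable ar h ->
  computableb ar (fun a => all (fun i => P (i :: a)) (iota 0 (h a))).
Proof.
move=> HP Hh.
have Hg := computable_mul (computable_proj _ 1) (computable_cons_drop 2 0 HP).
apply: computable_ext (computable_primrec (computable_const _ 1) Hg Hh) _ => a _.
elim: (h a) => [|n IH] //.
rewrite -[in iota _ _]addn1 iotaD all_cat /= IH drop0 andbT.
by case: (all _ _); case: (P _).
Qed.

Lemma sum_ltn_minn x N : \sum_(i < x) ((i < N) : nat) = minn N x.
Proof.
elim: x => [|x IH]; first by rewrite big_ord0 minn0.
by rewrite big_ord_recr /= IH; case: (ltnP x N) => H /=; lia.
Qed.

Lemma divn_sum x d : 0 < d -> x %/ d = \sum_(i < x) ((i.+1 * d <= x) : nat).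
Proof.
move=> d_gt0; rewrite (eq_bigr (fun i : 'I_x => ((i : nat) < x %/ d) : nat)).
  by rewrite sum_ltn_minn; apply/esym/minn_idPl; apply: leq_div.
by move=> i _; rewrite -leq_divRL.
Qed.

Lemma computable_div ar f g : computable ar f -> computable ar g ->
  computable ar (fun a => f a %/ g a).
Proof.
apply: computable_app2.
have Hsum : computable 2 (fun a => \sum_(i < nth 0 a 0) ((i.+1 * nth 0 a 1 <= nth 0 a 0) : nat)).
  apply: (@computable_sum _ (fun b => (nth 0 b 0).+1 * nth 0 b 2 <= nth 0 b 1)).
    by apply: computableb_leq; [apply: computable_mul; [apply: computable_succ|]|];
      apply: computable_proj.
  exact: computable_proj.
apply: computable_ext (computable_if (computableb_eq0 (computable_proj 2 1))
  (computable_zero 2) Hsum) _ => a _.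
by case: (posnP (nth 0 a 1)) => [->|/divn_sum <-]; rewrite ?divn0.
Qed.

Lemma computable_mod ar f g : computable ar f -> computable ar g ->
  computable ar (fun a => f a %% g a).
Proof.
move=> Hf Hg.
apply: computable_ext (computable_sub Hf (computable_mul (computable_div Hf Hg) Hg)) _ => a _.
by rewrite {1}(divn_eq (f a) (g a)) addKn.
Qed.

(** * Cantor pairing and list codes *)

Definition tri j := j * j.+1 %/ 2.

Lemma tri_double j : tri j * 2 = j * j.+1.
Proof.
elim: j => [|j IH] //; rewrite /tri.
have -> : j.+1 * j.+2 = j * j.+1 + j.+1 * 2 by lia.
by rewrite -IH divnMDl // mulnK // mulnDl.
Qed.

Lemma triS j : tri j.+1 = tri j + j.+1.
Proof. by have := tri_double j.+1; have := tri_double j; lia. Qed.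

Lemma leq_tri a b : a <= b -> tri a <= tri b.
Proof. by move=> /subnK <-; elim: (b - a) => [|c IH] //; rewrite addSn triS; lia. Qed.

Lemma leq_tri_id j : j <= tri j.
Proof. by elim: j => [|j IH] //; rewrite triS; lia. Qed.

Lemma npairE x y : npair x y = tri (x + y) + y.
Proof. by []. Qed.

Lemma npair_surj z : exists x y, npair x y = z.
Proof.
elim: z => [|z [[|x] [y E]]]; first by exists 0, 0.
  by exists y.+1, 0; rewrite -E !npairE !addn0 add0n triS; lia.
by exists x, y.+1; rewrite -E !npairE (addnS x y) (addSn x y); lia.
Qed.

Lemma npairK x y : nunpair (npair x y) = (x, y).
Proof.
rewrite /nunpair; set z := npair x y; set s := x + y.
have Ez : z = tri s + y by [].
have E8 : 8 * z + 1 = (2 * s + 1) * (2 * s + 1) + 8 * y.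
  by have := tri_double s; rewrite Ez; nia.
have L1 : 2 * s + 1 <= Nat.sqrt (8 * z + 1).
  by apply/ssrnat.leP; apply Nat.sqrt_le_square; apply/ssrnat.leP; rewrite E8; lia.
have L2 : Nat.sqrt (8 * z + 1) < 2 * s + 3.
  apply/ssrnat.ltP; apply Nat.sqrt_lt_square; apply/ssrnat.ltP; rewrite E8.
  have Hys : y <= s by lia.
  nia.
have -> : (Nat.sqrt (8 * z + 1) - 1) %/ 2 = s.
  have [->|->] : Nat.sqrt (8 * z + 1) = 2 * s + 1 \/ Nat.sqrt (8 * z + 1) = 2 * s + 2 by lia.
    by rewrite addnK mulKn.
  have -> : 2 * s + 2 - 1 = s * 2 + 1 by lia.
  by rewrite divnMDl // divn_small // addn0.
by rewrite -/(tri s) Ez addKn; congr pair; lia.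
Qed.

Lemma npairK1 x y : (nunpair (npair x y)).1 = x. Proof. by rewrite npairK. Qed.
Lemma npairK2 x y : (nunpair (npair x y)).2 = y. Proof. by rewrite npairK. Qed.

Lemma nunpairK z : npair (nunpair z).1 (nunpair z).2 = z.
Proof. by have [x [y <-]] := npair_surj z; rewrite npairK. Qed.

Lemma nunpair2_leq z : (nunpair z).2 <= z.
Proof. by have [x [y <-]] := npair_surj z; rewrite npairK npairE /=; lia. Qed.

Lemma computable_npair ar f g : computable ar f -> computable ar g ->
  computable ar (fun a => npair (f a) (g a)).
Proof.
move=> Hf Hg; apply: computable_add => //; apply: computable_div; last exact: computable_const.
by apply: computable_mul; [|apply: computable_succ]; apply: computable_add.
Qed.

(* [nunpair] extracts the diagonal of z through a square root; here it is
   found by counting the diagonals that start below z. *)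
Definition diag_index z := \sum_(i < z) ((tri i.+1 <= z) : nat).

Lemma diag_index_npair x y : diag_index (npair x y) = x + y.
Proof.
rewrite /diag_index (eq_bigr (fun i : 'I_(npair x y) => ((i : nat) < x + y) : nat)).
  by rewrite sum_ltn_minn; apply/minn_idPl; have := leq_tri_id (x + y); rewrite npairE; lia.
move=> i _; congr nat_of_bool; have E := npairE x y; case: (ltnP i (x + y)) => H.
  by apply/idP; apply: leq_trans (leq_tri H) _; rewrite E leq_addr.
by apply/negP => H'; have := leq_tri (H : (x + y).+1 <= i.+1); rewrite triS; lia.
Qed.

Lemma computable_tri ar f : computable ar f -> computable ar (fun a => tri (f a)).
Proof.
move=> Hf; apply: computable_div; last exact: computable_const.
by apply: computable_mul; last exact: computable_succ.
Qed.

Lemma computable_diag_index ar f : computable ar f -> computable ar (fun a => diag_index (f a)).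
Proof.
apply: computable_app1.
apply: (@computable_sum _ (fun b => tri (nth 0 b 0).+1 <= nth 0 b 1)); last exact: computable_proj.
by apply: computableb_leq; [apply: computable_tri; apply: computable_succ|]; apply: computable_proj.
Qed.

Lemma computable_unpair2 ar f : computable ar f -> computable ar (fun a => (nunpair (f a)).2).
Proof.
move=> Hf.
apply: computable_ext (computable_sub Hf (computable_tri (computable_diag_index Hf))) _ => a _.
by have [x [y <-]] := npair_surj (f a); rewrite npairK diag_index_npair npairE addKn.
Qed.

Lemma computable_unpair1 ar f : computable ar f -> computable ar (fun a => (nunpair (f a)).1).
Proof.
move=> Hf.
apply: computable_ext (computable_sub (computable_diag_index Hf) (computable_unpair2 Hf)) _ => a _.
by have [x [y <-]] := npair_surj (f a); rewrite npairK diag_index_npair addnK.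
Qed.

Lemma decode_list_fuel_eq f f' z :
  z <= f -> z <= f' -> decode_list_fuel f z = decode_list_fuel f' z.
Proof.
elim: f f' z => [|f IH] [|f'] [|z] //= H1 H2.
by rewrite (IH f') //; apply: leq_trans (nunpair2_leq z) _.
Qed.

Lemma decode_listS c : decode_list c.+1 = (nunpair c).1 :: decode_list (nunpair c).2.
Proof. by rewrite /decode_list /=; congr cons; apply: decode_list_fuel_eq; rewrite ?nunpair2_leq. Qed.

Lemma code_listK : cancel code_list decode_list.
Proof. by elim=> [|x l IH] //=; rewrite decode_listS npairK /= IH. Qed.

Lemma decode_listK : cancel decode_list code_list.
Proof.
move=> c; elim: c {-2}c (leqnn c) => [|n IH] [|c] // H.
rewrite decode_listS /= IH ?nunpairK //.
by apply: leq_trans (nunpair2_leq c) _; lia.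
Qed.

Lemma size_decode_list c : size (decode_list c) <= c.
Proof.
elim: c {-2}c (leqnn c) => [|n IH] [|c] // H.
rewrite decode_listS /= ltnS; apply: leq_trans (IH _ _) (nunpair2_leq c).
by apply: leq_trans (nunpair2_leq c) _; lia.
Qed.

Definition ccons x c := (npair x c).+1.
Definition chead c := (nunpair c.-1).1.
Definition ctail c := (nunpair c.-1).2.
Definition cnth i c := chead (iter i ctail c).

Lemma decode_ctail c : decode_list (ctail c) = behead (decode_list c).
Proof. by case: c => [|c] //; rewrite decode_listS. Qed.

Lemma iter_ctail0 i : iter i ctail 0 = 0.
Proof. by elim: i => //= i ->. Qed.

Lemma cnthE i c : cnth i c = nth 0 (decode_list c) i.
Proof.
elim: i c => [|i IH] [|c].
- by [].
- by rewrite decode_listS.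
- by rewrite /cnth iter_ctail0.
- by rewrite /cnth iterSr -/(cnth i _) IH decode_ctail decode_listS.
Qed.

Lemma computable_ccons ar f g : computable ar f -> computable ar g ->
  computable ar (fun a => ccons (f a) (g a)).
Proof. by move=> Hf Hg; apply: computable_succ; apply: computable_npair. Qed.

Lemma computable_chead ar f : computable ar f -> computable ar (fun a => chead (f a)).
Proof. by move=> Hf; apply: computable_unpair1; apply: computable_pred. Qed.

Lemma computable_ctail ar f : computable ar f -> computable ar (fun a => ctail (f a)).
Proof. by move=> Hf; apply: computable_unpair2; apply: computable_pred. Qed.

Lemma computable_cnth ar f g : computable ar f -> computable ar g ->
  computable ar (fun a => cnth (f a) (g a)).
Proof.
move=> Hf Hg; apply: computable_chead.
exact: computable_iter Hg Hf (computable_ctail (computable_proj _ 0)).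
Qed.

Definition csize c := \sum_(i < c) ((iter i ctail c != 0) : nat).

Lemma csizeE c : csize c = size (decode_list c).
Proof.
rewrite /csize (eq_bigr (fun i : 'I_c => ((i : nat) < size (decode_list c)) : nat)).
  by rewrite sum_ltn_minn; apply/minn_idPl; apply: size_decode_list.
move=> i _; congr nat_of_bool; move: (i : nat) => j; elim: j c {i} => [|j IH] [|c].
- by [].
- by rewrite decode_listS.
- by rewrite iter_ctail0.
- by rewrite iterSr IH decode_ctail decode_listS.
Qed.

Lemma computable_csize ar f : computable ar f -> computable ar (fun a => csize (f a)).
Proof.
apply: computable_app1.
apply: (@computable_sum _ (fun b => iter (nth 0 b 0) ctail (nth 0 b 1) != 0)); last first.
  exact: computable_proj.
apply/computableb_neg/computableb_eq0.
exact: computable_iter (computable_proj _ _) (computable_proj _ _)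
  (computable_ctail (computable_proj _ 0)).
Qed.

Lemma computable_cons ar f g : computable ar.+1 f -> computable ar g ->
  computable ar (fun a => f (g a :: a)).
Proof.
move=> Hf Hg.
have Hgs : List.Forall (computable ar) (g :: map (fun i a => nth 0 a i) (iota 0 ar)).
  by constructor => //; elim: (iota 0 ar) => [|i l IH] /=; constructor => //; exact: computable_proj.
apply: computable_ext (computable_comp Hf _ Hgs) _; first by rewrite /= size_map size_iota.
by move=> a Ha; rewrite /= -map_comp -Ha -/(mkseq _ _) mkseq_nth.
Qed.

Lemma computable_foldl ar g c i0 : computable ar.+2 g -> computable ar c -> computable ar i0 ->
  computable ar (fun a => foldl (fun acc x => g (x :: acc :: a)) (i0 a) (decode_list (c a))).
Proof.
move=> Hg Hc Hi.
pose G b := g (cnth (nth 0 b 0) (c (drop 2 b)) :: drop 1 b).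
have HG : computable ar.+2 G := computable_cons (computable_cons_drop 2 0 Hg)
  (computable_cnth (computable_proj _ 0) (computable_drop 2 Hc)).
apply: computable_ext (computable_primrec Hi HG (computable_csize Hc)) _ => a _.
rewrite csizeE; set l := decode_list (c a).
suff E n : n <= size l ->
    primrec i0 G n a = foldl (fun acc x => g (x :: acc :: a)) (i0 a) (take n l).
  by rewrite E // take_size.
elim: n => [|n IH] Hn /=; first by rewrite take0.
by rewrite /G /= drop0 cnthE IH 1?ltnW // (take_nth 0) // -cats1 foldl_cat.
Qed.

Lemma foldl_ccons s l :
  foldl (fun acc x => ccons x acc) (code_list s) l = code_list (rev l ++ s).
Proof.
elim: l s => [|x l IH] s //=.
by rewrite -[ccons x _]/(code_list (x :: s)) IH rev_cons -cats1 -catA.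
Qed.

Lemma computable_rev ar c : computable ar c ->
  computable ar (fun a => code_list (rev (decode_list (c a)))).
Proof.
move=> Hc; apply: computable_ext (computable_foldl
  (computable_ccons (computable_proj _ 0) (computable_proj _ 1)) Hc (computable_zero _)) _.
by move=> a _; rewrite -[0]/(code_list [::]) foldl_ccons cats0.
Qed.

Lemma computable_foldr ar g c i0 : computable ar.+2 g -> computable ar c -> computable ar i0 ->
  computable ar (fun a => foldr (fun x acc => g (x :: acc :: a)) (i0 a) (decode_list (c a))).
Proof.
move=> Hg Hc Hi; apply: computable_ext (computable_foldl Hg (computable_rev Hc) Hi) _ => a _.
by rewrite code_listK foldl_rev.
Qed.

Lemma computable_map ar g c : computable ar.+1 g -> computable ar c ->
  computable ar (fun a => code_list (map (fun x => g (x :: a)) (decode_list (c a)))).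
Proof.
move=> Hg Hc.
have Hg' := computable_ccons (computable_cons_drop 2 0 Hg) (computable_proj _ 1).
apply: computable_ext (computable_foldr Hg' Hc (computable_zero _)) _ => a _.
by elim: (decode_list (c a)) => //= x l ->; rewrite drop0.
Qed.

Lemma computable_cat ar c1 c2 : computable ar c1 -> computable ar c2 ->
  computable ar (fun a => code_list (decode_list (c1 a) ++ decode_list (c2 a))).
Proof.
move=> H1 H2; apply: computable_ext (computable_foldr
  (computable_ccons (computable_proj _ 0) (computable_proj _ 1)) H1 H2) _ => a _.
by elim: (decode_list (c1 a)) => /= [|x l ->]; rewrite ?decode_listK.
Qed.

(** * Normal forms in F(n,m) *)

Definition decode_word (c : nat) : word := map nunpair (decode_list c).

Lemma decode_wordK : cancel decode_word code_word.
Proof.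
move=> c; rewrite /code_word /decode_word -map_comp (eq_map (g := id)) ?map_id ?decode_listK //.
by move=> x /=; rewrite nunpairK.
Qed.

Lemma code_wordK : cancel code_word decode_word.
Proof.
move=> w; rewrite /code_word /decode_word code_listK -map_comp (eq_map (g := id)) ?map_id //.
by case=> x y /=; rewrite npairK.
Qed.

Lemma decode_wordS c : decode_word c.+1 = nunpair (nunpair c).1 :: decode_word (nunpair c).2.
Proof. by rewrite /decode_word decode_listS. Qed.

Lemma code_word_cons l w : code_word (l :: w) = ccons (npair l.1 l.2) (code_word w).
Proof. by []. Qed.

Definition cpush (m c v e0 : nat) : nat :=
  let e := e0 %% m in
  if e == 0 then c else
  if c == 0 then ccons (npair v e) 0 else
  if (nunpair (chead c)).1 == v then
     (let f := ((nunpair (chead c)).2 + e) %% m in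
      if f == 0 then ctail c else ccons (npair v f) (ctail c))
  else ccons (npair v e) c.

Lemma cpushE m c v e0 : cpush m c v e0 = code_word (push_letter m (decode_word c) (v, e0)).
Proof.
rewrite /cpush /push_letter; case: (e0 %% m == 0); first by rewrite decode_wordK.
case: c => [|c] //; rewrite decode_wordS /chead /ctail succnK.
case E: (nunpair (nunpair c).1) => [v' e'].
have -> : (c.+1 == 0) = false by [].
rewrite [(v', e').1]/= [(v', e').2]/= [(v, e0).1]/= [(v, e0).2]/=.
case: (v' == v); last by rewrite -(decode_wordK c.+1) decode_wordS E.
by case: (_ == 0); rewrite ?decode_wordK // code_word_cons decode_wordK.
Qed.

Lemma computable_cpush ar fm fc fv fe : computable ar fm -> computable ar fc ->
  computable ar fv -> computable ar fe ->
  computable ar (fun a => cpush (fm a) (fc a) (fv a) (fe a)).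
Proof.
move=> Hm Hc Hv He; have Hem := computable_mod He Hm.
have Hhd := computable_chead Hc; have Htl := computable_ctail Hc.
have Hf := computable_mod (computable_add (computable_unpair2 Hhd) Hem) Hm.
apply: computable_if (computableb_eq0 Hem) _ _ => //.
apply: computable_if (computableb_eq0 Hc) _ _.
  exact: computable_ccons (computable_npair Hv Hem) (computable_zero _).
apply: computable_if (computableb_eq (computable_unpair1 Hhd) Hv) _ _.
  exact: computable_if (computableb_eq0 Hf) Htl (computable_ccons (computable_npair Hv Hf) Htl).
exact: computable_ccons (computable_npair Hv Hem) Hc.
Qed.

Definition cnf_step (n m acc x : nat) : nat :=
  if (nunpair x).1 < n then cpush m acc (nunpair x).1 (nunpair x).2 else acc.

Definition cnf n m c := code_word (nf n m (decode_word c)).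

Lemma cnf_foldl n m c :
  cnf n m c = code_list (rev (decode_list (foldl (cnf_step n m) 0 (decode_list c)))).
Proof.
have fold_push st l : foldl (fun st l => if l.1 < n then push_letter m st l else st) st
    (map nunpair l) = decode_word (foldl (cnf_step n m) (code_word st) l).
  elim: l st => [|x l IH] st /=; first by rewrite code_wordK.
  rewrite IH /cnf_step; case: (_ < n) => //.
  by rewrite cpushE code_wordK -surjective_pairing.
rewrite /cnf /nf /decode_word fold_push /code_word map_rev -map_comp.
by rewrite (eq_map (g := id)) ?map_id // => x /=; exact: nunpairK.
Qed.

Lemma computable_cnf ar fn fm fc : computable ar fn -> computable ar fm -> computable ar fc ->
  computable ar (fun a => cnf (fn a) (fm a) (fc a)).
Proof.
move=> Hn Hm Hc.
have Hx1 := computable_unpair1 (computable_proj ar.+2 0).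
have Hs : computable ar.+2
    (fun b => cnf_step (fn (drop 2 b)) (fm (drop 2 b)) (nth 0 b 1) (nth 0 b 0)).
  apply: computable_if (computableb_ltn Hx1 (computable_drop 2 Hn)) _ (computable_proj _ 1).
  exact: computable_cpush (computable_drop 2 Hm) (computable_proj _ 1) Hx1
    (computable_unpair2 (computable_proj _ 0)).
apply: computable_ext (computable_rev (computable_foldl Hs Hc (computable_zero _))) _ => a _.
by rewrite cnf_foldl /= drop0.
Qed.

Definition cgmul n m x y := code_word (gmul n m (decode_word x) (decode_word y)).
Definition cginv n m x := code_word (ginv n m (decode_word x)).

Lemma computable_cgmul ar fn fm f1 f2 : computable ar fn -> computable ar fm ->
  computable ar f1 -> computable ar f2 ->
  computable ar (fun a => cgmul (fn a) (fm a) (f1 a) (f2 a)).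
Proof.
move=> Hn Hm H1 H2; apply: computable_ext (computable_cnf Hn Hm (computable_cat H1 H2)) _.
by move=> a _; rewrite /cnf /cgmul /gmul /decode_word code_listK map_cat.
Qed.

Lemma computable_cginv ar fn fm fc : computable ar fn -> computable ar fm -> computable ar fc ->
  computable ar (fun a => cginv (fn a) (fm a) (fc a)).
Proof.
move=> Hn Hm Hc; have Hm1 := computable_drop 1 Hm.
have Hletter := computable_npair (computable_unpair1 (computable_proj _ 0))
  (computable_sub Hm1 (computable_mod (computable_unpair2 (computable_proj _ 0)) Hm1)).
apply: computable_ext (computable_cnf Hn Hm (computable_rev (computable_map Hletter Hc))) _.
move=> a _; rewrite /cnf /cginv /ginv /decode_word !code_listK map_rev -!map_comp.
by congr (code_word (nf _ _ (rev _))); apply: eq_map => x /=; rewrite npairK drop0.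
Qed.

(** * Exact arithmetic on codes of Gaussian rationals *)

Lemma code_ratK : cancel code_rat decode_rat.
Proof.
move=> q; rewrite /decode_rat /code_rat !npairK /= prednK ?absz_gt0 ?denq_neq0 //.
have -> : (`|denq q|%:R = (denq q)%:~R :> rat)%R by rewrite natr_absz gtr0_norm ?denq_gt0.
rewrite natr_absz -[RHS](divq_num_den q); case: (ltrP (numq q) 0) => H /=.
  by rewrite ltr0_norm // mulN1r rmorphN mulNr opprK.
by rewrite ger0_norm // mul1r.
Qed.

(* Rationals are coded as (p - q) / (d + 1) with p, q, d natural: unlike
   [code_rat], these codes need no gcd normalisation, so the field operations
   and the order are given by polynomial formulas on p, q, d. *)
Definition rcode p q d := npair p (npair q d).
Definition rplus r := (nunpair r).1.
Definition rminus r := (nunpair (nunpair r).2).1.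
Definition rden r := (nunpair (nunpair r).2).2.
Definition rval (r : nat) : rat := (((rplus r)%:R - (rminus r)%:R) / (rden r).+1%:R)%R.

Lemma rval_rcode p q d : rval (rcode p q d) = ((p%:R - q%:R) / d.+1%:R)%R.
Proof. by rewrite /rval /rplus /rminus /rden /rcode !npairK. Qed.

Lemma rval0 : rval 0 = 0%R.
Proof. by rewrite -[0]/(rcode 0 0 0) rval_rcode subrr mul0r. Qed.

Definition radd x y := rcode (rplus x * (rden y).+1 + rplus y * (rden x).+1)
  (rminus x * (rden y).+1 + rminus y * (rden x).+1) ((rden x).+1 * (rden y).+1).-1.
Definition rmul x y := rcode (rplus x * rplus y + rminus x * rminus y)
  (rplus x * rminus y + rminus x * rplus y) ((rden x).+1 * (rden y).+1).-1.
Definition ropp x := rcode (rminus x) (rplus x) (rden x).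
Definition rlt x y := rplus x * (rden y).+1 + rminus y * (rden x).+1
  < rplus y * (rden x).+1 + rminus x * (rden y).+1.
Definition rle x y := rplus x * (rden y).+1 + rminus y * (rden x).+1
  <= rplus y * (rden x).+1 + rminus x * (rden y).+1.

Lemma predn_mulSS a b : ((a.+1 * b.+1).-1).+1 = a.+1 * b.+1.
Proof. by rewrite prednK // muln_gt0. Qed.

Lemma rval_add x y : rval (radd x y) = (rval x + rval y)%R.
Proof.
rewrite /radd rval_rcode /rval predn_mulSS !natrM !natrD !natrM.
have Dx : ((rden x).+1%:R != 0 :> rat)%R by rewrite pnatr_eq0.
have Dy : ((rden y).+1%:R != 0 :> rat)%R by rewrite pnatr_eq0.
move: Dx Dy; move: ((rden x).+1%:R : rat) ((rden y).+1%:R : rat) => Nx Ny Dx Dy.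
by field; rewrite Dx Dy.
Qed.

Lemma rval_mul x y : rval (rmul x y) = (rval x * rval y)%R.
Proof.
rewrite /rmul rval_rcode /rval predn_mulSS !natrM !natrD !natrM.
have Dx : ((rden x).+1%:R != 0 :> rat)%R by rewrite pnatr_eq0.
have Dy : ((rden y).+1%:R != 0 :> rat)%R by rewrite pnatr_eq0.
move: Dx Dy; move: ((rden x).+1%:R : rat) ((rden y).+1%:R : rat) => Nx Ny Dx Dy.
by field; rewrite Dx Dy.
Qed.

Lemma rval_opp x : rval (ropp x) = (- rval x)%R.
Proof. by rewrite /ropp rval_rcode /rval -mulNr opprB. Qed.

Lemma ltr_natB A B C D : ((A%:R - B%:R : rat) < C%:R - D%:R)%R = (A + D < C + B).
Proof. by rewrite -(ltr_nat rat) !natrD; apply/idP/idP; lra. Qed.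

Lemma ler_natB A B C D : ((A%:R - B%:R : rat) <= C%:R - D%:R)%R = (A + D <= C + B).
Proof. by rewrite -(ler_nat rat) !natrD; apply/idP/idP; lra. Qed.

Lemma rltE x y : rlt x y = (rval x < rval y)%R.
Proof.
rewrite /rval ltr_pdivrMr ?ltr0Sn // mulrAC ltr_pdivlMr ?ltr0Sn //.
by rewrite !mulrBl -!natrM ltr_natB /rlt; congr (_ < _); lia.
Qed.

Lemma rleE x y : rle x y = (rval x <= rval y)%R.
Proof.
rewrite /rval ler_pdivrMr ?ltr0Sn // mulrAC ler_pdivlMr ?ltr0Sn //.
by rewrite !mulrBl -!natrM ler_natB /rle; congr (_ <= _); lia.
Qed.

Section ComputableRationalCodes.

Variables (ar : nat) (f g : seq nat -> nat).
Hypotheses (Hf : computable ar f) (Hg : computable ar g).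

Let Pf := computable_unpair1 Hf.
Let Pg := computable_unpair1 Hg.
Let Mf := computable_unpair1 (computable_unpair2 Hf).
Let Mg := computable_unpair1 (computable_unpair2 Hg).
Let Df := computable_succ (computable_unpair2 (computable_unpair2 Hf)).
Let Dg := computable_succ (computable_unpair2 (computable_unpair2 Hg)).

Lemma computable_rcode h : computable ar h -> computable ar (fun a => rcode (f a) (g a) (h a)).
Proof. by move=> Hh; apply: computable_npair => //; apply: computable_npair. Qed.

Lemma computable_radd : computable ar (fun a => radd (f a) (g a)).
Proof.
apply: computable_npair; first by apply: computable_add; apply: computable_mul.
apply: computable_npair; first by apply: computable_add; apply: computable_mul.
by apply: computable_pred; apply: computable_mul.
Qed.

Lemma computable_rmul : computable ar (fun a => rmul (f a) (g a)).
Proof.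
apply: computable_npair; first by apply: computable_add; apply: computable_mul.
apply: computable_npair; first by apply: computable_add; apply: computable_mul.
by apply: computable_pred; apply: computable_mul.
Qed.

Lemma computable_ropp : computable ar (fun a => ropp (f a)).
Proof.
apply: computable_npair => //; apply: computable_npair => //.
exact: computable_unpair2 (computable_unpair2 Hf).
Qed.

Lemma computableb_rlt : computableb ar (fun a => rlt (f a) (g a)).
Proof. by apply: computableb_ltn; apply: computable_add; apply: computable_mul. Qed.

Lemma computableb_rle : computableb ar (fun a => rle (f a) (g a)).
Proof. by apply: computableb_leq; apply: computable_add; apply: computable_mul. Qed.

End ComputableRationalCodes.

Definition rcode_rat c :=
  let: (p, d) := nunpair (nunpair c).2 in
  if (nunpair c).1 == 0 then rcode p 0 d else rcode 0 p d.

Lemma rval_rcode_rat c : rval (rcode_rat c) = decode_rat c.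
Proof.
rewrite /rcode_rat /decode_rat; case: (nunpair (nunpair c).2) => p d.
by case: (_ == 0); rewrite rval_rcode ?mul1r ?subr0 // sub0r !mulNr mul1r.
Qed.

Lemma rcode_ratK q : rval (rcode_rat (code_rat q)) = q.
Proof. by rewrite rval_rcode_rat code_ratK. Qed.

Lemma computable_rcode_rat ar f : computable ar f -> computable ar (fun a => rcode_rat (f a)).
Proof.
move=> Hf; have Hp := computable_unpair1 (computable_unpair2 Hf).
have Hd := computable_unpair2 (computable_unpair2 Hf).
apply: computable_ext (computable_if (computableb_eq0 (computable_unpair1 Hf))
  (computable_rcode Hp (computable_zero _) Hd) (computable_rcode (computable_zero _) Hp Hd)) _.
by move=> a _; rewrite /rcode_rat; case: (nunpair (nunpair (f a)).2).
Qed.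

Definition qval (z : nat) : Qi := (rval (nunpair z).1, rval (nunpair z).2).

Definition cqadd x y := npair (radd (nunpair x).1 (nunpair y).1) (radd (nunpair x).2 (nunpair y).2).
Definition cqsub x y :=
  npair (radd (nunpair x).1 (ropp (nunpair y).1)) (radd (nunpair x).2 (ropp (nunpair y).2)).
Definition cqmul x y := npair
  (radd (rmul (nunpair x).1 (nunpair y).1) (ropp (rmul (nunpair x).2 (nunpair y).2)))
  (radd (rmul (nunpair x).1 (nunpair y).2) (rmul (nunpair x).2 (nunpair y).1)).
Definition cqconj x := npair (nunpair x).1 (ropp (nunpair x).2).
Definition cqnorm2 x := radd (rmul (nunpair x).1 (nunpair x).1) (rmul (nunpair x).2 (nunpair x).2).
Definition cq_of_code_qi c := npair (rcode_rat (nunpair c).1) (rcode_rat (nunpair c).2).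
Definition cq_of_qi (x : Qi) := npair (rcode_rat (code_rat x.1)) (rcode_rat (code_rat x.2)).

Lemma qval0 : qval 0 = qi0.
Proof. by rewrite /qval -[0]/(npair 0 0) !npairK rval0. Qed.

Lemma qval_add x y : qval (cqadd x y) = qadd (qval x) (qval y).
Proof. by rewrite /qval /cqadd npairK1 npairK2 2!rval_add. Qed.

Lemma qval_sub x y : qval (cqsub x y) = qsub (qval x) (qval y).
Proof. by rewrite /qval /cqsub npairK1 npairK2 2!rval_add 2!rval_opp. Qed.

Lemma qval_mul x y : qval (cqmul x y) = qmul (qval x) (qval y).
Proof. by rewrite /qval /cqmul npairK1 npairK2 2!rval_add rval_opp 4!rval_mul. Qed.

Lemma qval_conj x : qval (cqconj x) = qconj (qval x).
Proof. by rewrite /qval /cqconj npairK1 npairK2 rval_opp. Qed.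

Lemma rval_cqnorm2 x : rval (cqnorm2 x) = qnorm2 (qval x).
Proof. by rewrite /cqnorm2 /qnorm2 /qval rval_add 2!rval_mul /= !expr2. Qed.

Lemma qval_cq_of_code_qi c : qval (cq_of_code_qi c) = decode_qi c.
Proof. by rewrite /qval /cq_of_code_qi !npairK !rval_rcode_rat. Qed.

Lemma qval_cq_of_qi x : qval (cq_of_qi x) = x.
Proof. by case: x => a b; rewrite /qval /cq_of_qi npairK1 npairK2 !rcode_ratK. Qed.

Lemma qval_real r : qval (npair r 0) = qi_of_rat (rval r).
Proof. by rewrite /qval npairK1 npairK2 rval0. Qed.

Section ComputableGaussianCodes.

Variables (ar : nat) (f g : seq nat -> nat).
Hypotheses (Hf : computable ar f) (Hg : computable ar g).

Let F1 := computable_unpair1 Hf.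
Let F2 := computable_unpair2 Hf.
Let G1 := computable_unpair1 Hg.
Let G2 := computable_unpair2 Hg.

Lemma computable_cqadd : computable ar (fun a => cqadd (f a) (g a)).
Proof. by apply: computable_npair; apply: computable_radd. Qed.

Lemma computable_cqsub : computable ar (fun a => cqsub (f a) (g a)).
Proof. by apply: computable_npair; apply: computable_radd => //; apply: computable_ropp. Qed.

Lemma computable_cqmul : computable ar (fun a => cqmul (f a) (g a)).
Proof.
apply: computable_npair.
  exact: computable_radd (computable_rmul F1 G1) (computable_ropp (computable_rmul F2 G2)).
exact: computable_radd (computable_rmul F1 G2) (computable_rmul F2 G1).
Qed.

Lemma computable_cqconj : computable ar (fun a => cqconj (f a)).
Proof. by apply: computable_npair => //; apply: computable_ropp. Qed.

Lemma computable_cqnorm2 : computable ar (fun a => cqnorm2 (f a)).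
Proof. by apply: computable_radd; apply: computable_rmul. Qed.

Lemma computable_cq_of_code_qi : computable ar (fun a => cq_of_code_qi (f a)).
Proof. by apply: computable_npair; apply: computable_rcode_rat. Qed.

End ComputableGaussianCodes.

(** * Tables of values and the relaxed requirements *)

Definition table_lookup (T c : nat) : nat :=
  foldr (fun e acc => if (nunpair e).1 == c then (nunpair e).2 else acc) 0 (decode_list T).

Definition table_tau (T : nat) : word -> Qi := fun w => qval (table_lookup T (code_word w)).

Lemma computable_table_lookup ar fT fc : computable ar fT -> computable ar fc ->
  computable ar (fun a => table_lookup (fT a) (fc a)).
Proof.
move=> HT Hc.
have Hg := computable_if (computableb_eq (computable_unpair1 (computable_proj _ 0))
  (computable_drop 2 Hc)) (computable_unpair2 (computable_proj _ 0)) (computable_proj _ 1).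
apply: computable_ext (computable_foldr Hg HT (computable_zero _)) _ => a _.
by rewrite /= drop0.
Qed.

Definition decode_term n m c : Qi * word := (decode_qi (nunpair c).1, group_elt n m (nunpair c).2).

Definition cpos_term n m T x y :=
  cqmul (cqmul (cqconj (cq_of_code_qi (nunpair x).1)) (cq_of_code_qi (nunpair y).1))
    (table_lookup T (cgmul n m (cginv n m (cnf n m (nunpair x).2)) (cnf n m (nunpair y).2))).

Definition cpos_form n m T L :=
  foldr (fun x acc => cqadd (foldr (fun y acc' => cqadd (cpos_term n m T x y) acc') 0
    (decode_list L)) acc) 0 (decode_list L).

Lemma computable_cpos_term ar fn fm fT fx fy : computable ar fn -> computable ar fm ->
  computable ar fT -> computable ar fx -> computable ar fy ->
  computable ar (fun a => cpos_term (fn a) (fm a) (fT a) (fx a) (fy a)).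
Proof.
move=> Hn Hm HT Hx Hy.
apply: computable_cqmul.
  by apply: computable_cqmul; [apply: computable_cqconj|];
    apply: computable_cq_of_code_qi; apply: computable_unpair1.
apply: computable_table_lookup => //; apply: computable_cgmul => //.
  by apply: computable_cginv => //; apply: computable_cnf => //; apply: computable_unpair2.
by apply: computable_cnf => //; apply: computable_unpair2.
Qed.

Lemma computable_cpos_form ar fn fm fT fL : computable ar fn -> computable ar fm ->
  computable ar fT -> computable ar fL ->
  computable ar (fun a => cpos_form (fn a) (fm a) (fT a) (fL a)).
Proof.
move=> Hn Hm HT HL.
have Hterm := computable_cpos_term (computable_drop 4 Hn) (computable_drop 4 Hm)
  (computable_drop 4 HT) (computable_proj _ 2) (computable_proj _ 0).
have Hrow := computable_foldr (computable_cqadd Hterm (computable_proj _ 1))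
  (computable_drop 2 HL) (computable_zero _).
apply: computable_ext (computable_foldr (computable_cqadd Hrow (computable_proj _ 1)) HL
  (computable_zero _)) _ => a _.
by rewrite /= drop0.
Qed.

Lemma qaddA x y z : qadd (qadd x y) z = qadd x (qadd y z).
Proof. by rewrite /qadd /= !addrA. Qed.

Lemma add0q x : qadd qi0 x = x.
Proof. by case: x => a b; rewrite /qadd /= !add0r. Qed.

Lemma foldr_qadd_cat s1 s2 :
  foldr qadd qi0 (s1 ++ s2) = qadd (foldr qadd qi0 s1) (foldr qadd qi0 s2).
Proof. by elim: s1 => [|x s IH] /=; rewrite ?add0q // IH qaddA. Qed.

Lemma foldr_qadd_allpairs (A : Type) (F : A -> A -> Qi) (s t : seq A) :
  foldr qadd qi0 [seq F x y | x <- s, y <- t] =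
  foldr (fun x acc => qadd (foldr (fun y acc' => qadd (F x y) acc') qi0 t) acc) qi0 s.
Proof.
elim: s => [|x s IH] //=; rewrite foldr_qadd_cat IH; congr qadd.
by elim: t {IH} => //= y t ->.
Qed.

Lemma qval_foldr_cqadd (A : Type) (f : A -> nat) (l : seq A) :
  qval (foldr (fun x acc => cqadd (f x) acc) 0 l) = foldr (fun x acc => qadd (qval (f x)) acc) qi0 l.
Proof. by elim: l => [|x l IH] /=; rewrite ?qval0 // qval_add IH. Qed.

Lemma eq_foldr (A B : Type) (f g : A -> B -> B) z l :
  (forall x y, f x y = g x y) -> foldr f z l = foldr g z l.
Proof. by move=> E; elim: l => //= x l ->. Qed.

Lemma qval_cpos_form n m T L :
  qval (cpos_form n m T L) = pos_form n m (table_tau T) (map (decode_term n m) (decode_list L)).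
Proof.
rewrite /cpos_form /pos_form foldr_qadd_allpairs foldr_map qval_foldr_cqadd.
apply: eq_foldr => x acc; congr qadd.
rewrite foldr_map qval_foldr_cqadd; apply: eq_foldr => y acc'; congr qadd.
rewrite /cpos_term 2!qval_mul qval_conj 2!qval_cq_of_code_qi /table_tau.
by rewrite /cgmul /cginv /cnf !code_wordK.
Qed.

Definition rcode_nat x := rcode x 0 0.

Lemma rval_rcode_nat x : rval (rcode_nat x) = x%:R%R.
Proof. by rewrite /rcode_nat rval_rcode subr0 divr1. Qed.

Definition rlt_inv_sqr K x := rlt (rmul x (rcode_nat (K * K))) (rcode_nat 1).

Lemma rlt_inv_sqrE K x : 0 < K -> rlt_inv_sqr K x = (rval x < (K%:R ^+ 2)^-1)%R.
Proof.
move=> K_gt0; rewrite /rlt_inv_sqr rltE rval_mul !rval_rcode_nat natrM -expr2.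
by rewrite -[in RHS]div1r ltr_pdivlMr ?exprn_gt0 ?ltr0n.
Qed.

Lemma computableb_rlt_inv_sqr ar fK fx : computable ar fK -> computable ar fx ->
  computableb ar (fun a => rlt_inv_sqr (fK a) (fx a)).
Proof.
move=> HK Hx; apply: computableb_rlt (computable_const _ _).
apply: computable_rmul (computable_rcode _ (computable_zero _) (computable_zero _)) => //.
exact: computable_mul.
Qed.

Definition cnear_nonneg K z :=
  if rle 0 (nunpair z).1 then rlt_inv_sqr K (rmul (nunpair z).2 (nunpair z).2)
  else rlt_inv_sqr K (cqnorm2 z).

Lemma cnear_nonnegE K z : 0 < K -> cnear_nonneg K z = near_nonneg K (qval z).
Proof.
move=> K_gt0; rewrite /cnear_nonneg /near_nonneg rleE rval0 2?rlt_inv_sqrE //.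
by rewrite rval_mul rval_cqnorm2 expr2.
Qed.

Lemma computableb_cnear_nonneg ar fK fz : computable ar fK -> computable ar fz ->
  computableb ar (fun a => cnear_nonneg (fK a) (fz a)).
Proof.
move=> HK Hz; have Z1 := computable_unpair1 Hz; have Z2 := computable_unpair2 Hz.
apply: computableb_if; first exact: computableb_rle (computable_zero _) Z1.
  exact: computableb_rlt_inv_sqr HK (computable_rmul Z2 Z2).
exact: computableb_rlt_inv_sqr HK (computable_cqnorm2 Hz).
Qed.

Definition creq n m K T l :=
  let c := (nunpair l).2 in
  let lam := cnf n m (nunpair c).1 in
  let gam := cnf n m (nunpair c).2 in
  if (nunpair l).1 == 0 then cnear_nonneg K (cpos_form n m T c)
  else rlt_inv_sqr K (cqnorm2 (cqsub
    (table_lookup T (cgmul n m (cginv n m gam) (cgmul n m lam gam))) (table_lookup T lam))).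

Lemma creqE n m K T l : 0 < K -> creq n m K T l <-> relaxed_req n m K (table_tau T) l.
Proof.
move=> K_gt0; rewrite /creq /relaxed_req; case: (_ == 0).
  by rewrite cnear_nonnegE // qval_cpos_form.
rewrite rlt_inv_sqrE // rval_cqnorm2 qval_sub /table_tau /cgmul /cginv /cnf.
by rewrite !code_wordK.
Qed.

Lemma computableb_creq ar fn fm fK fT fl : computable ar fn -> computable ar fm ->
  computable ar fK -> computable ar fT -> computable ar fl ->
  computableb ar (fun a => creq (fn a) (fm a) (fK a) (fT a) (fl a)).
Proof.
move=> Hn Hm HK HT Hl; have Hc := computable_unpair2 Hl.
have Hlam := computable_cnf Hn Hm (computable_unpair1 Hc).
have Hgam := computable_cnf Hn Hm (computable_unpair2 Hc).
apply: computableb_if; first exact: computableb_eq0 (computable_unpair1 Hl).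
  exact: computableb_cnear_nonneg HK (computable_cpos_form Hn Hm HT Hc).
apply: computableb_rlt_inv_sqr HK (computable_cqnorm2 (computable_cqsub _ _)).
  apply: computable_table_lookup HT (computable_cgmul Hn Hm _ _) => //.
    exact: computable_cginv.
  exact: computable_cgmul.
exact: computable_table_lookup.
Qed.

Definition ctau_ext n m T c :=
  foldr (fun e acc => cqadd (cqmul (cq_of_code_qi (nunpair e).1)
    (table_lookup T (cnf n m (nunpair e).2))) acc) 0 (decode_list c).

Lemma code_qiK : cancel code_qi decode_qi.
Proof. by case=> x y; rewrite /decode_qi /code_qi npairK1 npairK2 !code_ratK. Qed.

Lemma ctau_extE n m T x : qval (ctau_ext n m T (code_gralg x)) = tau_ext n m (table_tau T) x.
Proof.
rewrite /ctau_ext /code_gralg code_listK foldr_map qval_foldr_cqadd /tau_ext.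
apply: eq_foldr => aw acc; rewrite qval_mul qval_cq_of_code_qi npairK1 npairK2 code_qiK.
by rewrite /table_tau /cnf code_wordK.
Qed.

Lemma computable_ctau_ext ar fn fm fT fc : computable ar fn -> computable ar fm ->
  computable ar fT -> computable ar fc ->
  computable ar (fun a => ctau_ext (fn a) (fm a) (fT a) (fc a)).
Proof.
move=> Hn Hm HT Hc; have He := computable_proj ar.+2 0.
have Hg := computable_cqadd (computable_cqmul (computable_cq_of_code_qi (computable_unpair1 He))
  (computable_table_lookup (computable_drop 2 HT) (computable_cnf (computable_drop 2 Hn)
    (computable_drop 2 Hm) (computable_unpair2 He)))) (computable_proj _ 1).
apply: computable_ext (computable_foldr Hg Hc (computable_zero _)) _ => a _.
by rewrite /= drop0.
Qed.

Lemma computable_sfun (s : sfun) ar f1 f2 f3 f4 f5 f6 f7 : computable_s s ->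
  computable ar f1 -> computable ar f2 -> computable ar f3 -> computable ar f4 ->
  computable ar f5 -> computable ar f6 -> computable ar f7 ->
  computable ar (fun a => code_gralg (s (f1 a) (f2 a) (f3 a) (f4 a) (f5 a) (f6 a) (f7 a))).
Proof.
move=> [e He] H1 H2 H3 H4 H5 H6 H7.
have [E HE] : computable ar (fun a => code_list [:: f1 a; f2 a; f3 a; f4 a; f5 a; f6 a; f7 a]).
  by do 7! (apply: computable_ccons => //); exact: computable_zero.
exists (PComp e [:: E]) => a Ha.
by econstructor; [constructor; [exact: HE|constructor]|exact: He].
Qed.

(** * The verifier *)

Lemma size_flatten_uniform (A : Type) (F : A -> seq nat) (s : seq A) L :
  (forall x, size (F x) = L) -> size (flatten (map F s)) = size s * L.
Proof. by move=> H; elim: s => //= x s IH; rewrite size_cat IH H mulSn. Qed.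

Lemma nth_flatten_uniform (A : Type) (F : A -> seq nat) (s : seq A) x0 L i j :
  (forall x, size (F x) = L) -> i < size s -> j < L ->
  nth 0 (flatten (map F s)) (i * L + j) = nth 0 (F (nth x0 s i)) j.
Proof.
move=> H; elim: s i => //= x s IH [|i] Hi Hj; first by rewrite nth_cat H Hj.
by rewrite nth_cat H mulSn -addnA ltnNge leq_addr /= addKn IH.
Qed.

Section PointCode.

Variables (n m : nat) (p : 'I_n -> 'I_n -> 'I_m -> 'I_m -> rat).

Definition prow v w i := [seq code_rat (p v w i j) | j <- enum 'I_m].
Definition pblock v w := flatten [seq prow v w i | i <- enum 'I_m].
Definition pslab v := flatten [seq pblock v w | w <- enum 'I_n].
Definition pcode := flatten [seq pslab v | v <- enum 'I_n].

Lemma code_inputE k : code_input n m k p = code_list [:: n; m; k; code_list pcode].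
Proof. by []. Qed.

Lemma pcode_nth (v w : 'I_n) (i j : 'I_m) :
  nth 0 pcode (((v * n + w) * m + i) * m + j) = code_rat (p v w i j).
Proof.
have Srow v' w' i' : size (prow v' w' i') = m by rewrite size_map size_enum_ord.
have Sblock v' w' : size (pblock v' w') = m * m.
  by rewrite (size_flatten_uniform _ (Srow v' w')) size_enum_ord.
have Sslab v' : size (pslab v') = n * (m * m).
  by rewrite (size_flatten_uniform _ (Sblock v')) size_enum_ord.
have := ltn_ord w; have := ltn_ord i; have := ltn_ord j => Hj Hi Hw.
have -> : ((v * n + w) * m + i) * m + j = v * (n * (m * m)) + (w * (m * m) + (i * m + j)).
  by nia.
rewrite (nth_flatten_uniform v Sslab) ?size_enum_ord ?nth_ord_enum //; last by nia.
rewrite (nth_flatten_uniform w (Sblock v)) ?size_enum_ord ?nth_ord_enum //; last by nia.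
rewrite (nth_flatten_uniform i (Srow v w)) ?size_enum_ord ?nth_ord_enum //.
by rewrite (nth_map j) ?size_enum_ord // nth_ord_enum.
Qed.

End PointCode.

Definition input_n z := cnth 0 z.
Definition input_m z := cnth 1 z.
Definition input_k z := cnth 2 z.
Definition input_p z := cnth 3 z.

Lemma input_nE n m k p : input_n (code_input n m k p) = n.
Proof. by rewrite /input_n cnthE code_inputE code_listK. Qed.
Lemma input_mE n m k p : input_m (code_input n m k p) = m.
Proof. by rewrite /input_m cnthE code_inputE code_listK. Qed.
Lemma input_kE n m k p : input_k (code_input n m k p) = k.
Proof. by rewrite /input_k cnthE code_inputE code_listK. Qed.
Lemma input_pE n m k p : input_p (code_input n m k p) = code_list (pcode p).
Proof. by rewrite /input_p cnthE code_inputE code_listK. Qed.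

Definition disc_table T :=
  all (fun e => rle (cqnorm2 (nunpair e).2) (rcode_nat 1)) (decode_list T).

Definition approx_table T z :=
  all (creq (input_n z) (input_m z) (input_k z) T) (iota 0 (input_k z)).

(* [((v * n + w) * m + i) * m + j] is the position of p(i,j|v,w) in the
   lexicographic listing of p inside [code_input]. *)
Definition adapted_entry (s : sfun) T z v w i j :=
  let n := input_n z in let m := input_m z in let k := input_k z in
  rlt_inv_sqr k (cqnorm2 (cqsub
    (npair (rcode_rat (cnth (((v * n + w) * m + i) * m + j) (input_p z))) 0)
    (ctau_ext n m T (code_gralg (s v w i j k n m))))).

Definition adapted_table (s : sfun) T z :=
  all (fun v => all (fun w => all (fun i => all (fun j => adapted_entry s T z v w i j)
    (iota 0 (input_m z))) (iota 0 (input_m z))) (iota 0 (input_n z))) (iota 0 (input_n z)).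

Definition check (s : sfun) T z := [&& disc_table T, approx_table T z & adapted_table s T z].

Lemma computableb_all_decode ar P c : computableb ar.+1 P -> computable ar c ->
  computableb ar (fun a => all (fun x => P (x :: a)) (decode_list (c a))).
Proof.
move=> HP Hc.
have Hg := computable_mul (computable_cons_drop 2 0 HP) (computable_proj _ 1).
apply: computable_ext (computable_foldr Hg Hc (computable_const _ 1)) _ => a _.
by elim: (decode_list (c a)) => //= x l ->; rewrite drop0; case: (P _); case: (all _ _).
Qed.

Lemma computableb_check s : computable_s s ->
  computableb 2 (fun a => check s (nth 0 a 0) (nth 0 a 1)).
Proof.
move=> Hs.
have Hinput ar i j : computable ar (fun a => cnth j (nth 0 a i)).
  exact: computable_cnth (computable_const _ _) (computable_proj _ _).
have Hdisc : computableb 3 (fun b => rle (cqnorm2 (nunpair (nth 0 b 0)).2) (rcode_nat 1)).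
  exact: computableb_rle (computable_cqnorm2 (computable_unpair2 (computable_proj _ 0)))
    (computable_const _ _).
have Hreq : computableb 3 (fun b => creq (input_n (nth 0 b 2)) (input_m (nth 0 b 2))
    (input_k (nth 0 b 2)) (nth 0 b 1) (nth 0 b 0)).
  exact: computableb_creq (Hinput _ 2 0) (Hinput _ 2 1) (Hinput _ 2 2)
    (computable_proj _ 1) (computable_proj _ 0).
have Hentry : computableb 6 (fun b => adapted_entry s (nth 0 b 4) (nth 0 b 5)
    (nth 0 b 3) (nth 0 b 2) (nth 0 b 1) (nth 0 b 0)).
  have Hn := Hinput 6 5 0; have Hm := Hinput 6 5 1; have Hk := Hinput 6 5 2.
  apply: (computableb_rlt_inv_sqr Hk (computable_cqnorm2 (computable_cqsub _ _))).
    apply: computable_npair (computable_zero _); apply: computable_rcode_rat.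
    apply: computable_cnth (Hinput 6 5 3).
    by repeat (apply: computable_add || apply: computable_mul || apply: computable_proj).
  apply: (computable_ctau_ext Hn Hm (computable_proj _ 4)).
  exact: computable_sfun Hs (computable_proj _ 3) (computable_proj _ 2) (computable_proj _ 1)
    (computable_proj _ 0) Hk Hn Hm.
apply: computableb_and (computableb_all_decode Hdisc (computable_proj _ 0)) _.
apply: computableb_and (computableb_all Hreq (Hinput 2 1 2)) _.
exact: computableb_all (computableb_all (computableb_all (computableb_all Hentry
  (Hinput 5 4 1)) (Hinput 4 3 1)) (Hinput 3 2 0)) (Hinput 2 1 0).
Qed.

Lemma table_lookup_cases T c :
  table_lookup T c = 0 \/ exists2 e, e \in decode_list T & table_lookup T c = (nunpair e).2.
Proof.
rewrite /table_lookup; elim: (decode_list T) => [|e l IH] /=; first by left.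
case: (_ == c); first by right; exists e; rewrite ?mem_head.
by case: IH => [->|[e' He' ->]]; [left|right; exists e'; rewrite // in_cons He' orbT].
Qed.

Lemma check_sound s n m k p T : 0 < k -> check s T (code_input n m k p) -> in_X n m k s p.
Proof.
move=> k_gt0 /and3P [Hdisc Happrox Hadapted]; exists (table_tau T); split.
- move=> w; rewrite /table_tau.
  case: (table_lookup_cases T (code_word (nf n m w))) => [->|[e He ->]].
    by rewrite qval0 /qnorm2 /= expr2 mulr0 addr0.
  by move/allP: Hdisc => /(_ e He); rewrite rleE rval_cqnorm2 rval_rcode_nat.
- move=> l Hl; apply/creqE => //.
  by move/allP: Happrox => /(_ l); rewrite mem_iota input_kE input_nE input_mE; apply.
- move=> v w i j; move: Hadapted; rewrite /adapted_table input_nE input_mE.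
  move=> /allP/(_ v); rewrite mem_iota ltn_ord => /(_ isT).
  move=> /allP/(_ w); rewrite mem_iota ltn_ord => /(_ isT).
  move=> /allP/(_ i); rewrite mem_iota ltn_ord => /(_ isT).
  move=> /allP/(_ j); rewrite mem_iota ltn_ord => /(_ isT).
  rewrite /adapted_entry input_nE input_mE input_kE input_pE rlt_inv_sqrE //.
  by rewrite rval_cqnorm2 qval_sub qval_real ctau_extE cnthE code_listK pcode_nth rcode_ratK.
Qed.

Definition req_words n m l : seq word :=
  let xs := map (decode_term n m) (decode_list (nunpair l).2) in
  let lam := group_elt n m (nunpair (nunpair l).2).1 in
  let gam := group_elt n m (nunpair (nunpair l).2).2 in
  if (nunpair l).1 == 0 then [seq gmul n m (ginv n m x.2) y.2 | x <- xs, y <- xs]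
  else [:: gmul n m (ginv n m gam) (gmul n m lam gam); lam].

Lemma relaxed_req_eq_in n m k tau1 tau2 l : {in req_words n m l, tau1 =1 tau2} ->
  relaxed_req n m k tau1 l -> relaxed_req n m k tau2 l.
Proof.
rewrite /relaxed_req /req_words; case: (_ == 0) => E; last first.
  by rewrite -!E // ?mem_head // in_cons mem_head orbT.
set xs := map _ _; suff -> : pos_form n m tau2 xs = pos_form n m tau1 xs by [].
rewrite /pos_form; congr (foldr _ _ _); apply/eq_in_allpairs => x y Hx Hy /=.
by rewrite E //; apply/allpairsP; exists (x, y).
Qed.

Lemma tau_ext_eq_in n m tau1 tau2 x : {in [seq nf n m aw.2 | aw <- x], tau1 =1 tau2} ->
  tau_ext n m tau1 x = tau_ext n m tau2 x.
Proof.
rewrite /tau_ext; elim: x => //= aw x IH E.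
by rewrite E ?mem_head // IH // => w Hw; apply: E; rewrite in_cons Hw orbT.
Qed.

Definition adapted_words (s : sfun) n m k : seq word :=
  flatten [seq flatten [seq flatten [seq flatten [seq [seq nf n m aw.2 | aw <- s v w i j k n m]
    | j <- iota 0 m] | i <- iota 0 m] | w <- iota 0 n] | v <- iota 0 n].

Definition relevant_words s n m k :=
  flatten [seq req_words n m l | l <- iota 0 k] ++ adapted_words s n m k.

Lemma relevant_words_nf s n m k w : w \in relevant_words s n m k -> exists w', w = nf n m w'.
Proof.
rewrite mem_cat => /orP [/flatten_mapP [l _]|/flatten_mapP [v _ /flatten_mapP [w1 _
   /flatten_mapP [i _ /flatten_mapP [j _ /mapP [aw _ ->]]]]]]; last by exists aw.2.
rewrite /req_words; case: (_ == 0).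
  by move=> /allpairsP [[x y] [_ _ ->]]; exists (ginv n m x.2 ++ y.2).
by rewrite !inE => /orP [|] /eqP ->; eexists.
Qed.

Definition tabulate (tau : word -> Qi) (W : seq word) :=
  code_list [seq npair (code_word w) (cq_of_qi (tau w)) | w <- W].

Lemma table_tau_tabulate tau W w : w \in W -> table_tau (tabulate tau W) w = tau w.
Proof.
rewrite /table_tau /table_lookup /tabulate code_listK.
set f := fun e acc => _.
have foldr_cons x l : foldr f 0 (x :: l) = f x (foldr f 0 l) by [].
elim: W => [|w0 W IH] //; rewrite map_cons in_cons foldr_cons {1}/f npairK1 npairK2.
case: (eqVneq (code_word w0) (code_word w)) => [/(can_inj code_wordK) -> _|NE /orP [/eqP E|]].
- by rewrite qval_cq_of_qi.
- by rewrite E eqxx in NE.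
- exact: IH.
Qed.

Lemma check_complete s n m k p : 0 < k -> in_X n m k s p ->
  exists T, check s T (code_input n m k p).
Proof.
move=> k_gt0 [tau [Hdisc Happrox Hadapted]].
pose W := relevant_words s n m k.
have HW w : w \in W -> table_tau (tabulate tau W) w = tau w by exact: table_tau_tabulate.
exists (tabulate tau W); apply/and3P; split.
- apply/allP => e; rewrite /tabulate code_listK => /mapP [w Hw ->].
  rewrite npairK2 rleE rval_cqnorm2 qval_cq_of_qi rval_rcode_nat.
  by have [w' ->] := relevant_words_nf Hw; apply: Hdisc.
- apply/allP => l; rewrite mem_iota input_kE => Hl.
  rewrite input_nE input_mE; apply/creqE => //.
  apply: (relaxed_req_eq_in _ (Happrox l Hl)) => w Hw; rewrite HW // mem_cat.
  by apply/orP; left; apply/flatten_mapP; exists l; rewrite ?mem_iota.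
- rewrite /adapted_table input_nE input_mE.
  apply/allP => v; rewrite mem_iota => Hv; apply/allP => w; rewrite mem_iota => Hw.
  apply/allP => i; rewrite mem_iota => Hi; apply/allP => j; rewrite mem_iota => Hj.
  have := Hadapted (Ordinal Hv) (Ordinal Hw) (Ordinal Hi) (Ordinal Hj).
  rewrite /adapted_entry input_nE input_mE input_kE input_pE rlt_inv_sqrE //.
  rewrite rval_cqnorm2 qval_sub qval_real ctau_extE cnthE code_listK.
  rewrite (pcode_nth p (Ordinal Hv) (Ordinal Hw) (Ordinal Hi) (Ordinal Hj)) rcode_ratK /=.
  rewrite (@tau_ext_eq_in _ _ (table_tau (tabulate tau W)) tau) // => w' Hw'.
  rewrite HW // mem_cat; apply/orP; right.
  apply/flatten_mapP; exists v; rewrite ?mem_iota //.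
  apply/flatten_mapP; exists w; rewrite ?mem_iota //.
  apply/flatten_mapP; exists i; rewrite ?mem_iota //.
  by apply/flatten_mapP; exists j; rewrite ?mem_iota.
Qed.

Lemma mu_search (R : nat -> nat -> bool) :
  computableb 2 (fun a => R (nth 0 a 0) (nth 0 a 1)) ->
  exists e, forall z, halts e z <-> exists x, R x z.
Proof.
move=> HR; have [C HC] := computable_sub (computable_const 2 1) HR.
exists (PMu C) => z; split.
- move=> [x Hx]; inversion Hx; subst; exists x.
  by have := eval_functional H0 (HC [:: x; z] erefl); case: (R x z).
- move=> ex; case: (ex_minnP ex) => x Rx x_min; exists x; apply: eMu.
    by have := HC [:: x; z] erefl; rewrite /= Rx.
  move=> i lt_ix; exists (1 - R i z); last exact: HC.
  by case Ri: (R i z); rewrite // ltnNge x_min in lt_ix.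
Qed.

Local Open Scope ring_scope.

Theorem lemma4p2 (s : sfun) (Hs : computable_s s) :
  exists e : prog,
    forall (n m k : nat), (2 <= n)%N -> (2 <= m)%N -> (1 <= k)%N ->
    forall p : 'I_n -> 'I_n -> 'I_m -> 'I_m -> rat,
      (forall v w i j, 0 <= p v w i j <= 1) ->
      (in_X n m k s p <-> halts e (code_input n m k p)).
Proof.
have [e He] := mu_search (computableb_check Hs).
exists e => n m k _ _ k_gt0 p _; rewrite He; split.
  exact: check_complete.
by case=> T; apply: check_sound.
Qed.
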